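(* Let $M$ be a finite set with $|M|=m$ and let $\mu$ be a probability distribution on the power set $\mathcal{P}(M)$. For $k\in\mathbb{N}$ let $S_1,\dots,S_k$ be independent random subsets of $M$, each with $\Pr[S_i=X]=\mu(\{X\})$ for $X\subseteq M$, and let $F^k_\ell$ denote the event $|\bigcap_{i=1}^k S_i|\ge\ell$. For $X\subseteq M$ let $X^\uparrow=\{Y\subseteq M: X\subseteq Y\}$, let $\mathcal{M}_\ell=\{X\subseteq M:|X|=\ell\}$, and let $A_\ell$ be the multiset $\{\mu(X^\uparrow): X\in\mathcal{M}_\ell\}$ for $\ell\in\{0,1,\dots,m\}$. Then the values $\Pr[F^k_\ell]$ for $\ell\in\{0,\dots,m\}$ and $k\in\{1,\dots,\binom{m}{\ell}\}$ continuously determine the multisets $A_\ell$ for all $\ell\in\{0,\dots,m\}$. That is, for every probability distribution $\mu$ on $\mathcal{P}(M)$ and every $\varepsilon>0$ there is $\delta>0$ such that for every probability distribution $\mu'$ on $\mathcal{P}(M)$ satisfying $|\Pr_{\mu}[F^k_\ell]-\Pr_{\mu'}[F^k_\ell]|\le\delta$ for all $\ell\in\{0,\dots,m\}$ and $k\in\{1,\dots,\binom{m}{\ell}\}$, there exist, for each $\ell$, a bijection $\pi_\ell:\mathcal{M}_\ell\to\mathcal{M}_\ell$ with $|\mu(X^\uparrow)-\mu'(\pi_\ell(X)^\uparrow)|\le\varepsilon$ for all $X\in\mathcal{M}_\ell$ (where $\Pr_{\mu}$, $\Pr_{\mu'}$ denote the probabilities computed with $S_i$ distributed according to $\mu$,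 resp. $\mu'$). In particular, if $\Pr_\mu[F^k_\ell]=\Pr_{\mu'}[F^k_\ell]$ for all such $\ell,k$, then the multisets $A_\ell$ computed from $\mu$ and from $\mu'$ coincide for every $\ell$. *)

From HB Require Import structures.
From mathcomp Require Import all_boot all_order all_algebra.
From mathcomp Require Import reals.
Set Implicit Arguments. Unset Strict Implicit. Unset Printing Implicit Defensive.
Import Order.TTheory GRing.Theory Num.Theory.
Local Open Scope ring_scope.

Definition is_distr (R : realType) (M : finType) (mu : {set M} -> R) : Prop :=
  (forall X, 0 <= mu X) /\ \sum_(X : {set M}) mu X = 1.

Definition mu_up (R : realType) (M : finType) (mu : {set M} -> R) (X : {set M}) : R :=
  \sum_(Y : {set M} | X \subset Y) mu Y.

(* Pr[F^k_l] = Pr[ |S_1 cap ... cap S_k| >= l ] where S_1..S_k are independent,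
   each distributed according to mu: the product distribution on k-tuples. *)
Definition PrF (R : realType) (M : finType) (mu : {set M} -> R) (k l : nat) : R :=
  \sum_(S : {ffun 'I_k -> {set M}})
     (\prod_(i < k) mu (S i)) *
     (if (l <= #|\bigcap_(i < k) S i|)%N then 1 else 0).

(* Pr[F^k_l] is the expectation of [|S_1 cap ... cap S_k| >= l], and on {0, ..., m} that
   indicator is a combination of the binomials C(N, j) with coefficient 1 at j = l and 0 below l.
   Since the expectation of C(|S_1 cap ... cap S_k|, j) is the k-th power sum of the multiset
   A_j, each Pr[F^k_l] is the k-th power sum of A_l plus a fixed combination of the k-th power
   sums of the A_j with j > l.  Going down from l = m, the first C(m, l) power sums of A_l are
   thus continuous in the data, and the first n power sums of an n-element multiset in [-1, 1]
   determine it continuously: by Newton's identities they determine the polynomial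
   prod (y - x) continuously, so each element of one multiset is close to an element of the
   other, and removing such a pair keeps the remaining power sums close.  The exact statement
   follows by taking eps below the least nonzero distance between the values involved. *)

From HB Require Import structures.
From mathcomp Require Import all_boot all_order all_algebra.
From mathcomp Require Import reals.
From mathcomp Require Import ring lra.
Set Implicit Arguments. Unset Strict Implicit. Unset Printing Implicit Defensive.
Import Order.TTheory GRing.Theory Num.Theory.
Local Open Scope ring_scope.

Section BinomialBasis.
Variable R : pzRingType.

Lemma binomial_interpolation (g : nat -> R) m : exists d : nat -> R,
  forall N, (N <= m)%N -> g N = \sum_(j < m.+1) d j * 'C(N, j)%:R.
Proof.
elim: m => [|m [d Hd]].
  by exists (fun=> g 0%N) => N; rewrite leqn0 => /eqP ->; rewrite big_ord1 mulr1.
pose top := g m.+1 - \sum_(j < m.+1) d j * 'C(m.+1, j)%:R.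
exists (fun j => if j == m.+1 then top else d j) => N le_N_m1.
rewrite big_ord_recr /= eqxx.
under eq_bigr => j _ do rewrite ltn_eqF //.
case: ltngtP le_N_m1 => // [lt_N_m1 _ | ->]; last by rewrite binn mulr1 addrC subrK.
by rewrite bin_small // mulr0 addr0 Hd.
Qed.

Lemma binomial_coef_vanish (d : nat -> R) n l : (l < n)%N ->
    (forall N, (N <= l)%N -> \sum_(j < n) d j * 'C(N, j)%:R = 0) ->
  forall j, (j <= l)%N -> d j = 0.
Proof.
move=> lt_l_n dC0; elim/ltn_ind => j IHj le_j_l.
rewrite -(dC0 j le_j_l) (bigD1 (Ordinal (leq_ltn_trans le_j_l lt_l_n))) //=.
rewrite binn mulr1 big1 ?addr0 // => i /eqP ne_ij.
case: (ltngtP i j) => [lt_ij | lt_ji | eq_ij].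
- by rewrite IHj ?mul0r // (leq_trans (ltnW lt_ij)).
- by rewrite bin_small ?mulr0.
- by case: ne_ij; apply: val_inj.
Qed.

Lemma threshold_binomial_expansion m l : (l <= m)%N -> exists e : nat -> R,
  (forall j, (j <= l)%N -> e j = 0) /\
  forall N, (N <= m)%N ->
    (if (l <= N)%N then 1 else 0) = 'C(N, l)%:R + \sum_(j < m.+1) e j * 'C(N, j)%:R.
Proof.
move=> le_l_m.
pose g N : R := (if (l <= N)%N then 1 else 0) - 'C(N, l)%:R.
have [e He] := binomial_interpolation g m.
exists e; split => [|N le_N_m]; last by rewrite -He // /g addrC subrK.
apply: (@binomial_coef_vanish _ m.+1) => // N le_N_l.
rewrite -He ?(leq_trans le_N_l) // /g.
by case: ltngtP le_N_l => // [lt_N_l _ | ->]; rewrite ?binn ?subrr // bin_small ?subrr.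
Qed.

End BinomialBasis.

Section SymmetricFunctions.
Variable R : comPzRingType.

(* [signed_esym s k] is (-1)^k e_k(s). *)
Fixpoint signed_esym (s : seq R) (k : nat) : R :=
  match k, s with
  | 0, _ => 1
  | k'.+1, [::] => 0
  | k'.+1, x :: s' => signed_esym s' k'.+1 - x * signed_esym s' k'
  end.

Definition psum (s : seq R) (k : nat) : R := \sum_(x <- s) x ^+ k.

Lemma signed_esym0 s : signed_esym s 0 = 1.
Proof. by case: s. Qed.

Lemma signed_esym_cons x s k :
  signed_esym (x :: s) k = signed_esym s k - x * (if k is j.+1 then signed_esym s j else 0).
Proof. by case: k => [|k] //=; rewrite signed_esym0 mulr0 subr0. Qed.

Lemma signed_esym_small s k : (size s < k)%N -> signed_esym s k = 0.
Proof.
elim: s k => [|x s IH] [|k] //= lt_s_k.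
by rewrite !IH ?mulr0 ?subr0 // ltnW.
Qed.

Lemma psum_cons x s k : psum (x :: s) k = x ^+ k + psum s k.
Proof. by rewrite /psum big_cons. Qed.

Lemma psum_perm s t k : perm_eq s t -> psum s k = psum t k.
Proof. exact: perm_big. Qed.

Lemma newton_identity s k :
  k%:R * signed_esym s k + \sum_(i < k) signed_esym s i * psum s (k - i) = 0.
Proof.
elim: s k => [|x s IH] [|k]; rewrite ?big_ord0 ?mul0r ?addr0 //.
  by rewrite /= mulr0 add0r big1 // => i _; rewrite /psum big_nil mulr0.
have shifted (F : nat -> R) :
    \sum_(i < k.+1) (if val i is j.+1 then signed_esym s j else 0) * F (k.+1 - i)%N
  = \sum_(i < k) signed_esym s i * F (k - i)%N.
  by rewrite big_ord_recl /= mul0r add0r.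
have x_terms : \sum_(i < k.+1) signed_esym s i * x ^+ (k.+1 - i)
    = x * \sum_(i < k) signed_esym s i * x ^+ (k - i) + signed_esym s k * x.
  rewrite big_ord_recr /= subSnn expr1 mulr_sumr; congr (_ + _).
  by apply: eq_bigr => i _; rewrite subSn 1?ltnW // exprS; ring.
have expand :
    \sum_(i < k.+1) signed_esym (x :: s) i * psum (x :: s) (k.+1 - i)
  = \sum_(i < k.+1) signed_esym s i * psum s (k.+1 - i)
    + \sum_(i < k.+1) signed_esym s i * x ^+ (k.+1 - i)
    - x * \sum_(i < k) signed_esym s i * psum s (k - i)
    - x * \sum_(i < k) signed_esym s i * x ^+ (k - i).
  rewrite -!shifted !mulr_sumr -big_split -!sumrB; apply: eq_bigr => i _.
  by rewrite signed_esym_cons psum_cons; case: i => [[|j] ?] /=; ring.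
have sum_eq j : \sum_(i < j) signed_esym s i * psum s (j - i) = - (j%:R * signed_esym s j).
  by apply/eqP; rewrite -addr_eq0 addrC IH.
rewrite expand x_terms !sum_eq signed_esym_cons -addn1 natrD; ring.
Qed.

Lemma prod_sub_signed_esym s y :
  \prod_(x <- s) (y - x) = \sum_(k < (size s).+1) signed_esym s k * y ^+ (size s - k).
Proof.
elim: s => [|x s IH]; first by rewrite big_nil big_ord1 /= expr0 mulr1.
rewrite big_cons IH; set n := size s.
have top : \sum_(k < n.+2) signed_esym s k * y ^+ (n.+1 - k)
    = y * \sum_(k < n.+1) signed_esym s k * y ^+ (n - k).
  rewrite big_ord_recr /= signed_esym_small // mul0r addr0 mulr_sumr.
  by apply: eq_bigr => k _; rewrite subSn -1?ltnS // exprS mulrCA.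
have shifted : \sum_(k < n.+2) (if val k is j.+1 then signed_esym s j else 0) * y ^+ (n.+1 - k)
    = \sum_(k < n.+1) signed_esym s k * y ^+ (n - k).
  by rewrite big_ord_recl /= mul0r add0r.
rewrite mulrBl -top -shifted mulr_sumr -sumrB.
by apply: eq_bigr => k _; rewrite signed_esym_cons mulrBl mulrA.
Qed.

End SymmetricFunctions.

Lemma signed_esymS (R : numFieldType) (s : seq R) k :
  signed_esym s k.+1 = (\sum_(i < k.+1) signed_esym s i * psum s (k.+1 - i)) * - k.+1%:R^-1.
Proof.
have nz : k.+1%:R != 0 :> R by rewrite pnatr_eq0.
have -> : \sum_(i < k.+1) signed_esym s i * psum s (k.+1 - i) = - (k.+1%:R * signed_esym s k.+1).
  by apply/eqP; rewrite -addr_eq0 addrC newton_identity.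
by rewrite mulrNN mulrAC divff ?mul1r.
Qed.

Lemma norm_mul_sub_le (R : realFieldType) (a b a' b' e : R) : e <= 1 ->
  `|a - a'| <= e -> `|b - b'| <= e -> `|a * b - a' * b'| <= (`|a| + `|b| + 1) * e.
Proof.
move=> e_le1 aa' bb'.
have -> : a * b - a' * b' = a * (b - b') + (a - a') * b' by ring.
apply: le_trans (ler_normD _ _) _; rewrite !normrM.
have b'_le : `|b'| <= `|b| + 1.
  rewrite -(subrKC b b') (le_trans (ler_normD _ _)) // lerD2l distrC.
  exact: le_trans bb' e_le1.
have := ler_wpM2l (normr_ge0 a) bb'; have := ler_pM (normr_ge0 _) (normr_ge0 _) aa' b'_le.
nra.
Qed.

Lemma norm_subXX_le (R : realFieldType) (u v : R) j : `|u| <= 1 -> `|v| <= 1 ->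
  `|u ^+ j - v ^+ j| <= j%:R * `|u - v|.
Proof.
move=> u_le1 v_le1; rewrite subrXX normrM mulrC ler_wpM2r //.
have -> : j%:R = \sum_(i < j) (1 : R) by rewrite sumr_const card_ord.
apply: le_trans (ler_norm_sum _ _ _) _.
apply: ler_sum => i _; rewrite normrM !normrX.
by rewrite mulr_ile1 ?exprn_ge0 ?exprn_ile1.
Qed.

Section PowerSumContinuity.
Variables (R : realFieldType) (n : nat) (A : seq R).

Definition ps_close (d : R) (B : seq R) :=
  forall j, (0 < j <= n)%N -> `|psum A j - psum B j| <= d.

Definition ps_continuous (F : seq R -> R) :=
  forall eps, 0 < eps -> exists2 d, 0 < d & forall B, ps_close d B -> `|F A - F B| <= eps.

Lemma ps_close_le d d' B : d <= d' -> ps_close d B -> ps_close d' B.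
Proof. by move=> le_dd' close j j_range; apply: le_trans (close j j_range) le_dd'. Qed.

Lemma ps_close_perm d B B' : perm_eq B B' -> ps_close d B -> ps_close d B'.
Proof. by move=> pBB' close j; rewrite -(psum_perm j pBB'); apply: close. Qed.

Lemma ps_continuous_ext F G : F =1 G -> ps_continuous F -> ps_continuous G.
Proof. by move=> eFG cF eps /cF[d d_gt0 Hd]; exists d => // B; rewrite -!eFG; apply: Hd. Qed.

Lemma ps_continuous_cst c : ps_continuous (fun=> c).
Proof. by move=> eps eps_gt0; exists 1 => // B _; rewrite subrr normr0 ltW. Qed.

Lemma ps_continuous_psum j : (0 < j <= n)%N -> ps_continuous (fun B => psum B j).
Proof. by move=> j_range eps eps_gt0; exists eps => // B; apply. Qed.

Lemma ps_continuousD F G : ps_continuous F -> ps_continuous G ->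
  ps_continuous (fun B => F B + G B).
Proof.
move=> cF cG eps eps_gt0; have eps2_gt0 : 0 < eps / 2 by rewrite divr_gt0.
have [dF dF_gt0 HF] := cF _ eps2_gt0; have [dG dG_gt0 HG] := cG _ eps2_gt0.
exists (Num.min dF dG) => [|B close]; first by rewrite lt_min dF_gt0.
have := HF B (ps_close_le _ close); have := HG B (ps_close_le _ close).
rewrite !ge_min !lexx ?orbT /= => /(_ isT) FB /(_ isT) GB.
rewrite opprD addrACA (le_trans (ler_normD _ _)) //; lra.
Qed.

Lemma ps_continuousM F G : ps_continuous F -> ps_continuous G ->
  ps_continuous (fun B => F B * G B).
Proof.
move=> cF cG eps eps_gt0; set K := `|F A| + `|G A| + 1.
have K_gt0 : 0 < K by rewrite ltr_wpDl ?addr_ge0.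
pose eta := Num.min 1 (eps / K).
have eta_gt0 : 0 < eta by rewrite lt_min ltr01 divr_gt0.
have [dF dF_gt0 HF] := cF _ eta_gt0; have [dG dG_gt0 HG] := cG _ eta_gt0.
exists (Num.min dF dG) => [|B close]; first by rewrite lt_min dF_gt0.
have FB := HF B (ps_close_le _ close); have GB := HG B (ps_close_le _ close).
rewrite !ge_min !lexx ?orbT /= in FB GB.
have eta_le1 : eta <= 1 by rewrite ge_min lexx.
apply: le_trans (norm_mul_sub_le eta_le1 (FB isT) (GB isT)) _.
by rewrite mulrC -ler_pdivlMr // ge_min lexx orbT.
Qed.

Lemma ps_continuous_sum p (F : nat -> seq R -> R) :
    (forall i, (i < p)%N -> ps_continuous (F i)) ->
  ps_continuous (fun B => \sum_(i < p) F i B).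
Proof.
elim: p => [|p IH] cF.
  by apply: ps_continuous_ext (ps_continuous_cst 0) => B; rewrite big_ord0.
have cS : ps_continuous (fun B => \sum_(i < p) F i B + F p B).
  by apply: ps_continuousD; [apply: IH => i lt_ip; apply: cF; rewrite ltnW | apply: cF].
by apply: ps_continuous_ext cS => B; rewrite big_ord_recr.
Qed.

Lemma ps_continuous_signed_esym k : (k <= n)%N -> ps_continuous (fun B => signed_esym B k).
Proof.
elim/ltn_ind: k => -[_ _ | k IH le_k1_n].
  by apply: ps_continuous_ext (ps_continuous_cst 1) => B; rewrite signed_esym0.
have cS : ps_continuous
    (fun B => (\sum_(i < k.+1) signed_esym B i * psum B (k.+1 - i)) * - k.+1%:R^-1).
  apply: ps_continuousM; last exact: ps_continuous_cst.
  apply: (ps_continuous_sum (F := fun i B => signed_esym B i * psum B (k.+1 - i))).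
  move=> i lt_i_k1.
  apply: ps_continuousM; first by apply: IH; rewrite // (leq_trans _ le_k1_n) // ltnW.
  by apply: ps_continuous_psum; rewrite subn_gt0 lt_i_k1 (leq_trans (leq_subr _ _)).
by apply: ps_continuous_ext cS => B; rewrite signed_esymS.
Qed.

End PowerSumContinuity.

Section PowerSumMatching.
Variable R : realFieldType.

Lemma exp_le_norm_prod (I : eqType) (s : seq I) (f : I -> R) r : 0 <= r ->
  (forall i, i \in s -> r <= `|f i|) -> r ^+ size s <= `|\prod_(i <- s) f i|.
Proof.
move=> r_ge0; elim: s => [|i s IH] le_r_f; first by rewrite big_nil normr1.
rewrite big_cons normrM exprS ler_pM ?exprn_ge0 ?le_r_f ?mem_head //.
by apply: IH => j js; apply: le_r_f; rewrite in_cons js orbT.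
Qed.

Lemma ps_close_root (A : seq R) x : x \in A -> forall rho, 0 < rho ->
  exists2 d, 0 < d & forall B, size B = size A -> ps_close (size A) A d B ->
    exists2 y, y \in B & `|x - y| <= rho.
Proof.
(* prod_(y <- B) (x - y) is close to prod_(a <- A) (x - a) = 0, but at least rho^n if
   no y is rho-close to x. *)
move=> xA rho rho_gt0; set n := size A.
have cP : ps_continuous n A (fun B => \sum_(k < n.+1) signed_esym B k * x ^+ (n - k)).
  apply: (ps_continuous_sum (F := fun k B => signed_esym B k * x ^+ (n - k))) => k lt_kn.
  by apply: ps_continuousM; [apply: ps_continuous_signed_esym | apply: ps_continuous_cst].
have rhon_gt0 : 0 < rho ^+ n by rewrite exprn_gt0.
have [d d_gt0 Hd] := cP (rho ^+ n / 2) ltac:(by rewrite divr_gt0).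
exists d => // B sizeB close; apply/hasP; apply/negPn/negP => /hasPn far.
have := Hd B close; rewrite -[in X in _ - X]sizeB -!prod_sub_signed_esym.
have -> : \prod_(a <- A) (x - a) = 0.
  by apply/eqP; rewrite prodf_seq_eq0; apply/hasP; exists x; rewrite // subrr eqxx.
have : rho ^+ n <= `|\prod_(y <- B) (x - y)|.
  rewrite -sizeB exp_le_norm_prod ?ltW // => y /far; rewrite -ltNge; exact: ltW.
rewrite sub0r normrN; lra.
Qed.

Lemma ps_close_cons n a b (A B : seq R) d : `|a| <= 1 -> `|b| <= 1 ->
  ps_close n.+1 (a :: A) d (b :: B) -> ps_close n A (d + n%:R * `|a - b|) B.
Proof.
move=> a_le1 b_le1 close j /andP[j_gt0 le_jn].
have := close j; rewrite j_gt0 (leq_trans le_jn) // !psum_cons => /(_ isT) close_j.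
have := norm_subXX_le j a_le1 b_le1; have : j%:R * `|a - b| <= n%:R * `|a - b|.
  by rewrite ler_wpM2r ?ler_nat.
have -> : psum A j - psum B j = (a ^+ j + psum A j - (b ^+ j + psum B j)) - (a ^+ j - b ^+ j).
  by ring.
move: (ler_normB (a ^+ j + psum A j - (b ^+ j + psum B j)) (a ^+ j - b ^+ j)); lra.
Qed.

Lemma in_inj_extend (T : eqType) (x0 y0 : T) (sa sb : seq T) (sig : T -> T) :
  y0 \notin sb -> {in sa, forall x, sig x \in sb} -> {in sa &, injective sig} ->
  {in x0 :: sa &, injective (fun x => if x == x0 then y0 else sig x)}.
Proof.
move=> y0_sb sig_sb sig_inj x y; rewrite !inE.
have [-> _|_ /= xa] := eqVneq x x0; have [-> _|_ /= ya] := eqVneq y x0 => //.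
- by move=> y0_sig; move: y0_sb; rewrite y0_sig sig_sb.
- by move=> sig_y0; move: y0_sb; rewrite -sig_y0 sig_sb.
- exact: sig_inj.
Qed.

Lemma power_sums_matching (T : eqType) (fa : T -> R) (sa : seq T) :
  (forall x, x \in sa -> `|fa x| <= 1) ->
  forall eps, 0 < eps -> exists2 d, 0 < d &
    forall (fb : T -> R) (sb : seq T), size sb = size sa -> uniq sb ->
      (forall y, y \in sb -> `|fb y| <= 1) ->
      ps_close (size sa) (map fa sa) d (map fb sb) ->
    exists sig : T -> T, [/\ forall x, x \in sa -> sig x \in sb,
      {in sa &, injective sig} & forall x, x \in sa -> `|fa x - fb (sig x)| <= eps].
Proof.
elim: sa => [|x0 sa IH] fa_le1 eps eps_gt0.
  by exists 1 => // fb sb _ _ _ _; exists id; split.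
have fa_le1' x : x \in sa -> `|fa x| <= 1 by move=> xa; rewrite fa_le1 // in_cons xa orbT.
have [dI dI_gt0 match_tail] := IH fa_le1' eps eps_gt0.
set n := size sa; pose rho := Num.min eps (dI / (2 * n.+1%:R)).
have rho_gt0 : 0 < rho by rewrite lt_min eps_gt0 divr_gt0 ?mulr_gt0.
have n_rho : n%:R * rho <= dI / 2.
  have -> : dI / 2 = n.+1%:R * (dI / (2 * n.+1%:R)).
    by field; rewrite addrC natr1 pnatr_eq0.
  by apply: ler_pM; rewrite ?ler0n ?ler_nat ?(ltW rho_gt0) // ge_min lexx orbT.
have [dR dR_gt0 root_close] := ps_close_root (map_f fa (mem_head x0 sa)) rho_gt0.
exists (Num.min dR (dI / 2)) => [|fb sb size_sb uniq_sb fb_le1 close].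
  by rewrite lt_min dR_gt0 divr_gt0.
have [_ /mapP[y0 y0_sb ->] x0y0] : exists2 y, y \in map fb sb & `|fa x0 - y| <= rho.
  apply: root_close; first by rewrite !size_map.
  by rewrite size_map; apply: ps_close_le close; rewrite ge_min lexx.
have close_tail : ps_close n (map fa sa) dI (map fb (rem y0 sb)).
  have perm_sb : perm_eq (map fb sb) (fb y0 :: map fb (rem y0 sb)).
    by rewrite -map_cons perm_map // perm_to_rem.
  have close_sb : ps_close n.+1 (fa x0 :: map fa sa) (dI / 2) (fb y0 :: map fb (rem y0 sb)).
    by apply: ps_close_perm perm_sb _; apply: ps_close_le close; rewrite ge_min lexx orbT.
  apply: ps_close_le (ps_close_cons (fa_le1 _ (mem_head _ _)) (fb_le1 _ y0_sb) close_sb).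
  have := ler_wpM2l (ler0n _ n) x0y0; lra.
have [sig [sig_sb sig_inj sig_close]] := match_tail fb (rem y0 sb)
  ltac:(by rewrite size_rem // size_sb) (rem_uniq _ uniq_sb)
  (fun y y_sb => fb_le1 y (mem_rem y_sb)) close_tail.
have y0_rem : y0 \notin rem y0 sb by rewrite mem_rem_uniq // inE eqxx.
exists (fun x => if x == x0 then y0 else sig x); split.
- move=> x; rewrite in_cons; case: eqP => [_ _ | _ /= xa]; first exact: y0_sb.
  exact: mem_rem (sig_sb x xa).
- exact: in_inj_extend y0_rem sig_sb sig_inj.
- move=> x; rewrite in_cons; case: eqP => [-> _ | _ /= xa]; last exact: sig_close.
  by apply: le_trans x0y0 _; rewrite ge_min lexx.
Qed.

End PowerSumMatching.

Lemma perm_map_in (T : eqType) (f : T -> T) (s : seq T) : uniq s ->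
  {in s &, injective f} -> {subset map f s <= s} -> perm_eq s (map f s).
Proof.
move=> uniq_s f_inj f_s; have uniq_fs : uniq (map f s) by rewrite map_inj_in_uniq.
have [_ eq_fs] := uniq_min_size uniq_fs f_s (eq_leq (esym (size_map f s))).
by apply: uniq_perm => // x; rewrite eq_fs.
Qed.

Section Levels.
Variables (R : realType) (M : finType).
Implicit Types (mu nu : {set M} -> R).

Definition level (l : nat) : seq {set M} := enum [set X : {set M} | #|X| == l].

Lemma mem_level l X : (X \in level l) = (#|X| == l).
Proof. by rewrite mem_enum inE. Qed.

Lemma size_level l : size (level l) = 'C(#|M|, l).
Proof. by rewrite -cardE card_draws. Qed.

Lemma level_uniq l : uniq (level l).
Proof. exact: enum_uniq. Qed.

Definition level_moment mu l k := psum (map (mu_up mu) (level l)) k.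

Lemma mu_upX mu X k : mu_up mu X ^+ k = \sum_(S : {ffun 'I_k -> {set M}})
  (\prod_(i < k) mu (S i)) * (if X \subset \bigcap_(i < k) S i then 1 else 0).
Proof.
rewrite /mu_up big_mkcond -[k in LHS]card_ord -prodr_const bigA_distr_bigA /=.
apply: eq_bigr => S _; case: ifPn => [sub_X | not_sub].
  by rewrite mulr1; apply: eq_bigr => i _; rewrite (subset_trans sub_X) ?bigcap_inf.
have /existsP[i not_sub_i] : [exists i, ~~ (X \subset S i)].
  by apply: contraR not_sub => /existsPn sub_X; apply/bigcapsP => i _; apply/negPn.
by rewrite mulr0 (bigD1 i) //= (negbTE not_sub_i) mul0r.
Qed.

Lemma level_momentE mu l k : level_moment mu l k = \sum_(S : {ffun 'I_k -> {set M}})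
  (\prod_(i < k) mu (S i)) * 'C(#|\bigcap_(i < k) S i|, l)%:R.
Proof.
rewrite /level_moment /psum big_map big_enum /=.
under eq_bigr do rewrite mu_upX.
rewrite exchange_big /=; apply: eq_bigr => S _; rewrite -mulr_sumr; congr (_ * _).
rewrite -cards_draws -sum1_card natr_sum big_mkcond [RHS]big_mkcond /=.
by apply: eq_bigr => X _; rewrite !inE andbC; case: (_ == l); case: (X \subset _).
Qed.

Lemma PrF_level_moments L : (L <= #|M|)%N -> exists e : nat -> R,
  (forall j, (j <= L)%N -> e j = 0) /\
  forall mu k, PrF mu k L = level_moment mu L k + \sum_(j < #|M|.+1) e j * level_moment mu j k.
Proof.
move=> le_LM; have [e [e_low He]] := threshold_binomial_expansion R le_LM.
exists e; split => // mu k; rewrite /PrF level_momentE.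
under eq_bigr do rewrite He ?max_card // mulrDr.
rewrite big_split /=; congr (_ + _).
under eq_bigr do rewrite mulr_sumr.
rewrite exchange_big /=; apply: eq_bigr => j _.
by rewrite level_momentE mulr_sumr; apply: eq_bigr => S _; rewrite mulrCA.
Qed.

Lemma mu_up_norm_le1 mu X : is_distr mu -> `|mu_up mu X| <= 1.
Proof.
case=> mu_ge0 <-; rewrite ger0_norm ?sumr_ge0 // /mu_up big_mkcond /=.
by apply: ler_sum => Y _; case: ifP.
Qed.

Definition level_matched mu mu' l (eps : R) :=
  exists pi : {set M} -> {set M},
    [/\ forall X : {set M}, #|X| = l -> #|pi X| = l,
        {in [pred X : {set M} | #|X| == l] &, injective pi} &
        forall X : {set M}, #|X| = l -> `|mu_up mu X - mu_up mu' (pi X)| <= eps].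

Lemma level_matched_le mu mu' l eps eps' :
  eps <= eps' -> level_matched mu mu' l eps -> level_matched mu mu' l eps'.
Proof.
by move=> le_eps [pi [pi_l pi_inj pi_close]]; exists pi; split => // X /pi_close /le_trans; apply.
Qed.

Lemma level_matched_of_seq mu mu' l eps (sig : {set M} -> {set M}) :
    (forall X, X \in level l -> sig X \in level l) -> {in level l &, injective sig} ->
    (forall X, X \in level l -> `|mu_up mu X - mu_up mu' (sig X)| <= eps) ->
  level_matched mu mu' l eps.
Proof.
move=> sig_level sig_inj sig_close; exists sig; split => [X | X Y | X].
- by move/eqP; rewrite -mem_level => /sig_level; rewrite mem_level => /eqP.
- by rewrite !inE -!mem_level; apply: sig_inj.
- by move/eqP; rewrite -mem_level; apply: sig_close.
Qed.

Lemma level_moment_matched mu mu' j k eps : is_distr mu -> is_distr mu' ->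
    level_matched mu mu' j eps ->
  `|level_moment mu j k - level_moment mu' j k| <= ('C(#|M|, j) * k)%:R * eps.
Proof.
move=> mu_distr mu'_distr [pi [pi_l pi_inj pi_close]].
have pi_level : perm_eq (level j) (map pi (level j)).
  apply: perm_map_in (level_uniq j) _ _.
    by move=> X Y; rewrite !mem_level; apply: pi_inj.
  by move=> _ /mapP[X + ->]; rewrite !mem_level => /eqP/pi_l ->.
rewrite /level_moment /psum [X in _ - X](perm_big _ (perm_map (mu_up mu') pi_level)).
rewrite -map_comp !big_map -sumrB (le_trans (ler_norm_sum _ _ _)) //.
have -> : ('C(#|M|, j) * k)%:R * eps = \sum_(X <- level j) k%:R * eps.
  by rewrite big_enum sumr_const card_draws -[RHS]mulr_natl natrM mulrA.
rewrite big_seq [leRHS]big_seq; apply: ler_sum => X; rewrite mem_level => /eqP X_j.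
apply: le_trans (norm_subXX_le k (mu_up_norm_le1 _ mu_distr) (mu_up_norm_le1 _ mu'_distr)) _.
by rewrite ler_wpM2l ?pi_close.
Qed.

Section Stability.
Variable mu : {set M} -> R.
Hypothesis mu_distr : is_distr mu.

Definition PrF_close mu' (d : R) :=
  forall l k : nat, (l <= #|M|)%N -> (1 <= k <= 'C(#|M|, l))%N ->
    `|PrF mu k l - PrF mu' k l| <= d.

Definition matched_from (L : nat) :=
  forall eps, 0 < eps -> exists2 delta, 0 < delta &
    forall mu', is_distr mu' -> PrF_close mu' delta ->
    forall l, (L <= l <= #|M|)%N -> level_matched mu mu' l eps.

Lemma level_ps_close L (e : nat -> R) d eta mu' :
    is_distr mu' -> (L <= #|M|)%N -> 0 <= eta ->
    (forall j, (j <= L)%N -> e j = 0) ->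
    (forall nu k, PrF nu k L = level_moment nu L k + \sum_(j < #|M|.+1) e j * level_moment nu j k) ->
    (forall j, (L < j <= #|M|)%N -> level_matched mu mu' j eta) ->
    PrF_close mu' d ->
  ps_close (size (level L)) (map (mu_up mu) (level L))
    (d + (\sum_(j < #|M|.+1) `|e j| * ('C(#|M|, j) * 'C(#|M|, L))%:R) * eta)
    (map (mu_up mu') (level L)).
Proof.
move=> mu'_distr le_LM eta_ge0 e_low expand above close k.
rewrite size_level => /andP[k_gt0 le_k]; rewrite -/(level_moment mu L k) -/(level_moment mu' L k).
have -> : level_moment mu L k - level_moment mu' L k = (PrF mu k L - PrF mu' k L)
    - \sum_(j < #|M|.+1) e j * (level_moment mu j k - level_moment mu' j k).
  by under eq_bigr do rewrite mulrBr; rewrite sumrB !expand; ring.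
apply: le_trans (ler_normB _ _) _; apply: lerD; first by apply: close; rewrite ?k_gt0.
rewrite mulr_suml (le_trans (ler_norm_sum _ _ _)) //; apply: ler_sum => j _.
rewrite normrM; have [le_jL | lt_Lj] := leqP j L; first by rewrite e_low // normr0 !mul0r.
rewrite -mulrA ler_wpM2l // (le_trans (level_moment_matched k mu_distr mu'_distr (above j _))) //.
  by rewrite lt_Lj -ltnS ltn_ord.
by rewrite ler_wpM2r // ler_nat leq_mul.
Qed.

Lemma matched_from_step L : (L <= #|M|)%N -> matched_from L.+1 -> matched_from L.
Proof.
move=> le_LM above eps eps_gt0.
have [dM dM_gt0 matching] :=
  power_sums_matching (sa := level L) (fun X _ => mu_up_norm_le1 X mu_distr) eps_gt0.
have [e [e_low expand]] := PrF_level_moments le_LM.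
pose K := \sum_(j < #|M|.+1) `|e j| * ('C(#|M|, j) * 'C(#|M|, L))%:R.
have K_ge0 : 0 <= K by apply: sumr_ge0 => j _; rewrite mulr_ge0.
have K1_gt0 : 0 < K + 1 by rewrite ltr_wpDl.
pose eta := Num.min eps (dM / (2 * (K + 1))).
have eta_gt0 : 0 < eta by rewrite lt_min eps_gt0 !divr_gt0 ?mulr_gt0.
have K_eta : K * eta <= dM / 2.
  have -> : dM / 2 = (K + 1) * (dM / (2 * (K + 1))) by field; rewrite lt0r_neq0.
  by apply: ler_pM; rewrite ?lerDl ?(ltW eta_gt0) // ge_min lexx orbT.
have [dI dI_gt0 matched_above] := above eta eta_gt0.
exists (Num.min dI (dM / 2)) => [|mu' mu'_distr close l /andP[le_Ll le_lM]].
  by rewrite lt_min dI_gt0 divr_gt0.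
have close_dI : PrF_close mu' dI.
  by move=> l' k le_l'M k_range; apply: le_trans (close _ _ le_l'M k_range) _; rewrite ge_min lexx.
have {}matched_above := matched_above mu' mu'_distr close_dI.
case: ltngtP le_Ll => // [lt_Ll _ | <- _].
  by apply: level_matched_le (matched_above l _); rewrite ?lt_Ll // ge_min lexx.
have moments := level_ps_close mu'_distr le_LM (ltW eta_gt0) e_low expand matched_above close.
have [|sig [sig_level sig_inj sig_close]] := matching (mu_up mu') (level L) erefl (level_uniq L)
  (fun Y _ => mu_up_norm_le1 Y mu'_distr).
  have : Num.min dI (dM / 2) <= dM / 2 by rewrite ge_min lexx orbT.
  by move=> le_dM2; apply: ps_close_le moments; rewrite -/K; lra.
exact: level_matched_of_seq sig_level sig_inj sig_close.
Qed.

Lemma matched_from0 : matched_from 0.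
Proof.
suff above t : (t <= #|M|.+1)%N -> matched_from (#|M|.+1 - t).
  by rewrite -(subnn #|M|.+1); apply: above.
elim: t => [_ eps eps_gt0 | t IH le_t1_M1].
  by exists 1 => // mu' _ _ l; rewrite subn0 ltnNge andNb.
rewrite subSS; apply: matched_from_step; first exact: leq_subr.
by rewrite -subSn //; apply: IH; apply: ltnW.
Qed.

End Stability.

End Levels.

Theorem lemma6 (R : realType) (M : finType) (mu : {set M} -> R) :
  is_distr mu ->
  (forall eps : R, 0 < eps -> exists2 delta : R, 0 < delta &
    forall mu' : {set M} -> R, is_distr mu' ->
      (forall l k : nat, (l <= #|M|)%N -> (1 <= k <= 'C(#|M|, l))%N ->
         `|PrF mu k l - PrF mu' k l| <= delta) ->
      forall l : nat, (l <= #|M|)%N ->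
        exists pi : {set M} -> {set M},
          [/\ forall X : {set M}, #|X| = l -> #|pi X| = l,
              {in [pred X : {set M} | #|X| == l] &, injective pi} &
              forall X : {set M}, #|X| = l ->
                `|mu_up mu X - mu_up mu' (pi X)| <= eps])
  /\
  (forall mu' : {set M} -> R, is_distr mu' ->
      (forall l k : nat, (l <= #|M|)%N -> (1 <= k <= 'C(#|M|, l))%N ->
         PrF mu k l = PrF mu' k l) ->
      forall l : nat, (l <= #|M|)%N ->
        exists pi : {set M} -> {set M},
          [/\ forall X : {set M}, #|X| = l -> #|pi X| = l,
              {in [pred X : {set M} | #|X| == l] &, injective pi} &
              forall X : {set M}, #|X| = l -> mu_up mu X = mu_up mu' (pi X)]).
Proof.
move=> mu_distr; have stable := matched_from0 mu_distr.
split=> [eps /stable[delta delta_gt0 matched] | mu' mu'_distr same_PrF l le_lM].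
  by exists delta => // mu' mu'_distr close l; exact: matched.
pose gap (XY : {set M} * {set M}) := `|mu_up mu XY.1 - mu_up mu' XY.2|.
pose g := \big[Num.min/1]_(XY | gap XY != 0) gap XY.
have g_gt0 : 0 < g by apply: lt_bigmin => // XY; rewrite lt0r normr_ge0 andbT.
have [delta delta_gt0 matched] := stable (g / 2) ltac:(by rewrite divr_gt0).
have [|pi [pi_l pi_inj pi_close]] := matched mu' mu'_distr _ l le_lM.
  by move=> l' k le_l'M k_range; rewrite same_PrF // subrr normr0 ltW.
exists pi; split => // X X_l; apply/eqP; rewrite -subr_eq0 -normr_eq0.
apply: contraTT (pi_close X X_l) => gap_neq0; rewrite -ltNge.
have : g <= gap (X, pi X) by apply: bigmin_le_cond.
rewrite /gap /=; lra.
Qed.
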